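(* Let $(X,d)$ be a compact metric space and $\mathcal{W}$ a uniformly bounded open cover of $X$. Let $\mu=\sum_{i=1}^nm_i\delta_{x_i}\in\mathrm{Viet}^{\mathrm{m}}(\mathcal{W})$ (distinct $x_i$, $m_i>0$), let $\mathcal{U}=\{U_1,\dots,U_n\}$ be pairwise disjoint open subsets of $X$ with $x_i\in U_i$ and $\bigcup_iU_i$ contained in an element of $\mathcal{W}$, let $\varepsilon>0$, and let $B(\mu)=\tilde B(\mu)\cap\mathrm{Viet}^{\mathrm{m}}(\mathcal{W})$ where $\tilde B(\mu)$ is an open Wasserstein ball centered at $\mu$ in $P(X)$. Then the multivalued map $F\colon P_{\mathcal{U}}\cap B(\mu)\to P(X)$, $F(\zeta)=\{\nu\in P(\mu,\mathcal{U},\varepsilon) : \mathrm{supp}(\nu)\subseteq\mathrm{supp}(\zeta)\}$, is lower semi-continuous.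
   Context: $P(X)$ is the space of Borel probability measures on $X$ (weak topology, equivalently Wasserstein metric). $\mathrm{Viet}^{\mathrm{m}}(\mathcal{W})\subseteq P(X)$ is the set of finitely supported probability measures whose support is contained in some element of $\mathcal{W}$. For finitely supported $\nu=\sum_jw_j\delta_{a_j}$ and $Y\subseteq X$, $\nu(Y)=\sum_{a_j\in Y}w_j$. $P_U=\{\nu\in\mathrm{Viet}^{\mathrm{m}}(\mathcal{W}):\mathrm{supp}(\nu)\cap U\ne\varnothing\}$, $P_{\mathcal{U}}=\bigcap_iP_{U_i}$, $P(\mu,\mathcal{U},\varepsilon)=\{\nu\in\mathrm{Viet}^{\mathrm{m}}(\mathcal{W}) : \mathrm{supp}(\nu)\subseteq\bigcup_iU_i,\ |\nu(U_i)-\mu(U_i)|\le\varepsilon\ \forall i\}$. A multivalued map $F\colon A\to Y$ is lower semi-continuous if for every open $S\subseteq Y$ the set $\{a\in A: F(a)\cap S\ne\varnothing\}$ is open in $A$. *)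

From HB Require Import structures.
From mathcomp Require Import all_boot all_order all_algebra.
From mathcomp Require Import all_classical all_reals all_analysis.
Set Implicit Arguments. Unset Strict Implicit. Unset Printing Implicit Defensive.
Import Order.TTheory GRing.Theory Num.Theory.
Local Open Scope classical_set_scope.
Local Open Scope ring_scope.

Section Defs.
Variables (R : realType) (X : choiceType) (d : X -> X -> R).

Definition is_metric : Prop :=
  [/\ forall x y, 0 <= d x y,
      forall x y, d x y = 0 <-> x = y,
      forall x y, d x y = d y x &
      forall x y z, d x z <= d x y + d y z].

Definition dball (x : X) (r : R) : set X := [set y | d x y < r].

Definition dopen (U : set X) : Prop :=
  forall x, U x -> exists2 r : R, 0 < r & dball x r `<=` U.

Definition dcompact : Prop :=
  forall (I : Type) (G : I -> set X), (forall i, dopen (G i)) ->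
    setT `<=` \bigcup_(i in setT) G i ->
    exists2 J : set I, finite_set J & setT `<=` \bigcup_(i in J) G i.

Definition unif_bdd_open_cover (W : set (set X)) : Prop :=
  [/\ forall U, W U -> dopen U,
      setT `<=` \bigcup_(U in W) U &
      exists D : R, forall U, W U -> forall a b, U a -> U b -> d a b <= D].

(* A (finitely supported) measure is represented by its weight function. *)
Definition supp (T : Type) (nu : T -> R) : set T := [set x | nu x != 0].

Definition fsprob (nu : X -> R) : Prop :=
  [/\ forall x, 0 <= nu x, finite_set (supp nu) & \sum_(x \in supp nu) nu x = 1].

Definition VietM (W : set (set X)) (nu : X -> R) : Prop :=
  fsprob nu /\ exists2 U, W U & supp nu `<=` U.

Definition meas (nu : X -> R) (Y : set X) : R := \sum_(x \in supp nu `&` Y) nu x.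

Definition coupling (mu nu : X -> R) (pi : X * X -> R) : Prop :=
  [/\ forall z, 0 <= pi z,
      supp pi `<=` supp mu `*` supp nu,
      forall x, \sum_(y \in supp nu) pi (x, y) = mu x &
      forall y, \sum_(x \in supp mu) pi (x, y) = nu y].

Definition tcost (p : R) (pi : X * X -> R) : R :=
  \sum_(z \in supp pi) pi z * (d z.1 z.2 `^ p).

Definition wass (p : R) (mu nu : X -> R) : R :=
  (inf [set c | exists2 pi, coupling mu nu pi & c = tcost p pi]) `^ p^-1.

(* sets open in P(X) (W_p topology = weak topology), traced on the finitely
   supported probability measures *)
Definition open_fs (p : R) (S : set (X -> R)) : Prop :=
  forall nu, fsprob nu -> S nu ->
    exists2 r : R, 0 < r & forall nu', fsprob nu' -> wass p nu nu' < r -> S nu'.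

Definition open_in (p : R) (A T : set (X -> R)) : Prop :=
  T `<=` A /\
  forall z, T z ->
    exists2 r : R, 0 < r & forall z', A z' -> wass p z z' < r -> T z'.

Definition lsc (p : R) (A : set (X -> R)) (F : (X -> R) -> set (X -> R)) : Prop :=
  forall S, open_fs p S -> open_in p A [set a | A a /\ exists2 nu, F a nu & S nu].

Definition P_one (W : set (set X)) (U : set X) : set (X -> R) :=
  [set nu | VietM W nu /\ supp nu `&` U !=set0].

Definition P_fam (W : set (set X)) (n : nat) (U : 'I_n -> set X) : set (X -> R) :=
  [set nu | forall i, P_one W (U i) nu].

Definition P_mu (W : set (set X)) (mu : X -> R) (n : nat) (U : 'I_n -> set X)
  (eps : R) : set (X -> R) :=
  [set nu | [/\ VietM W nu, supp nu `<=` \bigcup_(i in setT) U i &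
             forall i, `|meas nu (U i) - meas mu (U i)| <= eps]].

End Defs.

From HB Require Import structures.
From mathcomp Require Import all_boot all_order all_algebra.
From mathcomp Require Import all_classical all_reals all_analysis.
From mathcomp Require Import lra.
Import Order.TTheory GRing.Theory Num.Theory.
Local Open Scope classical_set_scope.
Local Open Scope ring_scope.

Set Implicit Arguments. Unset Strict Implicit.

(** Let [nu] be in [F zeta] and in an open set [S], which contains the
    [W_p]-ball of radius [r0] around [nu].  Choose [rho < r0] such that the
    [rho]-ball around every atom [a] of [nu] stays in the [U_i] containing [a],
    and [c > 0] below the [zeta]-mass of every such atom (they are atoms of
    [zeta]).  If [W_p(zeta, zeta') < (c rho^p)^(1/p)], every atom [a] of [nu]
    has an atom [f a] of [zeta'] at distance [< rho]: otherwise transporting the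
    mass [zeta a >= c] alone would cost at least [c rho^p].  The image measure
    [f_* nu] is then supported in [supp zeta'], gives each [U_i] the same mass
    as [nu] because [f] never leaves the block of the disjoint family [U] it
    starts in, and is within [rho] of [nu] for [W_p]; hence it lies in
    [F zeta' \cap S]. *)

Section FiniteSums.
Variable R : realType.

Lemma fsum_fibers (I J : choiceType) (A : set I) (B : set J) (f : I -> J)
    (g : I -> R) : finite_set A -> finite_set B ->
  \sum_(b \in B) \sum_(a \in A `&` f @^-1` [set b]) g a =
  \sum_(a \in A `&` f @^-1` B) g a.
Proof.
move=> Afin Bfin; under eq_fsbigr do rewrite fsbig_mkcondr.
rewrite exchange_fsbig // [RHS]fsbig_mkcondr; apply: eq_fsbigr => a _.
case: (pselect (B (f a))) => [Bfa|nBfa].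
- rewrite (fsbigD1 (f a)) //= mem_set // fsbig1 ?addr0 ?mem_set //.
  by move=> b [_ /= bfa]; rewrite memNset // => /esym.
- rewrite memNset // fsbig1 // => b Bb; rewrite memNset // => fab.
  by apply: nBfa; rewrite fab.
Qed.

Lemma fsum_ge_term (I : choiceType) (A : set I) (g : I -> R) a :
  finite_set A -> (forall x, A x -> 0 <= g x) -> A a -> g a <= \sum_(x \in A) g x.
Proof.
move=> Afin g0 Aa; rewrite (fsbigD1 a) //= lerDl.
by apply: fsumr_ge0 => x [/g0].
Qed.

Lemma ler_fsum (I : choiceType) (A : set I) (f g : I -> R) : finite_set A ->
  (forall x, A x -> f x <= g x) -> \sum_(x \in A) f x <= \sum_(x \in A) g x.
Proof.
move=> Afin fg; rewrite !fsbig_finite // big_seq [leRHS]big_seq.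
by apply: ler_sum => x; rewrite in_fset_set // inE => /fg.
Qed.

Lemma fsum_delta (I : choiceType) (A : set I) (c : I) (v : R) :
  finite_set A -> A c -> \sum_(y \in A) (if c == y then v else 0) = v.
Proof.
move=> Afin Ac; rewrite (fsbigD1 c) //= eqxx fsbig1 ?addr0 //.
by move=> y [_ /= yc]; case: eqP => // cy; case: yc.
Qed.

End FiniteSums.

Section Transport.
Variables (R : realType) (X : choiceType) (d : X -> X -> R).

Definition push (f : X -> X) (nu : X -> R) : X -> R :=
  fun b => meas nu (f @^-1` [set b]).

Definition graph_plan (f : X -> X) (nu : X -> R) : X * X -> R :=
  fun w => if f w.1 == w.2 then nu w.1 else 0.

Lemma supp_push_sub f nu : supp (push f nu) `<=` f @` supp nu.
Proof.
move=> b /negP nb; apply: contrapT => nfb; apply: nb; apply/eqP.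
by apply: fsbig1 => a [sa fab]; case: nfb; exists a.
Qed.

Lemma meas_push f nu Y : finite_set (supp nu) ->
  meas (push f nu) Y = meas nu (f @^-1` Y).
Proof.
move=> nufin; rewrite /meas (fsbig_widen _ (f @` supp nu `&` Y)); first last.
- move=> b [[_ Yb] /not_andP[/negP|//]].
  by rewrite /supp /= negbK => /eqP.
- by move=> b [/supp_push_sub].
rewrite fsum_fibers //; last exact/finite_setIl/finite_image.
apply: eq_fsbigl.
by apply/seteqP; split=> [a [sa []]|a [sa Yfa]] //; do !split => //; exists a.
Qed.

Lemma meas_push_local f nu Y : finite_set (supp nu) ->
    (forall a, supp nu a -> Y (f a) <-> Y a) ->
  meas (push f nu) Y = meas nu Y.
Proof.
move=> nufin fY; rewrite meas_push //; apply: eq_fsbigl.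
by apply/seteqP; split=> a [sa Ya]; split=> //; apply/fY.
Qed.

Section Probability.
Variables (f : X -> X) (nu : X -> R).
Hypothesis nuP : fsprob nu.

Lemma supp_push : supp (push f nu) = f @` supp nu.
Proof.
case: nuP => nu0 nufin _; apply/seteqP; split; first exact: supp_push_sub.
move=> _ [a sa <-]; rewrite /supp /= gt_eqF //.
apply: lt_le_trans (fsum_ge_term (a := a) _ _ _) => //.
- by rewrite lt_neqAle eq_sym sa nu0.
- exact: finite_setIl.
Qed.

Lemma fsprob_push : fsprob (push f nu).
Proof.
case: (nuP) => nu0 nufin nu1; split.
- by move=> b; apply: fsumr_ge0.
- by rewrite supp_push; apply: finite_image.
- have := meas_push f setT nufin.
  by rewrite /meas !setIT nu1.
Qed.

Lemma coupling_graph_plan : coupling nu (push f nu) (graph_plan f nu).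
Proof.
case: (nuP) => nu0 nufin _; have [_ pushfin _] := fsprob_push.
rewrite /graph_plan; split.
- by move=> [a b] /=; case: ifP.
- move=> [a b]; rewrite /supp /=; have [<- sa|_] := eqVneq (f a) b.
    by split=> //; have : supp (push f nu) (f a) by rewrite supp_push; exists a.
  by rewrite eqxx.
- move=> a /=; have [sa|/negP] := pselect (supp nu a).
    by rewrite fsum_delta // supp_push; exists a.
  by rewrite negbK => /eqP ->; apply: fsbig1 => b _; case: ifP.
- move=> b /=; rewrite /push /meas fsbig_mkcondr; apply: eq_fsbigr => a _.
  by case: eqP => [fab|nfab]; [rewrite mem_set | rewrite memNset].
Qed.

Lemma tcost_graph_plan p :
  tcost d p (graph_plan f nu) = \sum_(a \in supp nu) nu a * d a (f a) `^ p.
Proof.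
rewrite /tcost; have -> : supp (graph_plan f nu) = (fun a => (a, f a)) @` supp nu.
  apply/seteqP; split=> [[a b]|_ [a sa <-]]; rewrite /supp /graph_plan /=.
    by have [<- sa|_] := eqVneq (f a) b; [exists a | rewrite eqxx].
  by rewrite eqxx.
rewrite fsbig_image; last by move=> a b _ _ [].
by apply: eq_fsbigr => a _; rewrite /graph_plan /= eqxx.
Qed.

End Probability.
End Transport.

Section Wasserstein.
Variables (R : realType) (X : choiceType) (d : X -> X -> R) (p : R).
Hypothesis p_gt0 : 0 < p.

Let costs (mu nu : X -> R) :=
  [set c | exists2 pi, coupling mu nu pi & c = tcost d p pi].

Lemma tcost_ge0 (pi : X * X -> R) : (forall w, 0 <= pi w) -> 0 <= tcost d p pi.
Proof. by move=> pi0; apply: fsumr_ge0 => w _; rewrite mulr_ge0 ?powR_ge0. Qed.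

Lemma costs_lbound (mu nu : X -> R) : lbound (costs mu nu) 0.
Proof. by move=> _ [pi [pi0 _ _ _] ->]; exact: tcost_ge0. Qed.

Lemma coupling_product (mu nu : X -> R) : fsprob mu -> fsprob nu ->
  coupling mu nu (fun w => mu w.1 * nu w.2).
Proof.
move=> [mu0 _ mu1] [nu0 _ nu1]; split.
- by move=> w; rewrite mulr_ge0.
- by move=> [a b]; rewrite /supp /= mulf_eq0 negb_or => /andP.
- by move=> a /=; rewrite -mulr_fsumr nu1 mulr1.
- by move=> b /=; rewrite -mulr_fsuml mu1 mul1r.
Qed.

Lemma wass_le_tcost (mu nu : X -> R) pi : coupling mu nu pi ->
  wass d p mu nu <= tcost d p pi `^ p^-1.
Proof.
move=> cpi; have [pi0 _ _ _] := cpi.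
apply: ge0_ler_powR; rewrite ?invr_ge0 ?nnegrE ?(ltW p_gt0) ?tcost_ge0 //.
- by apply: lb_le_inf; [exists (tcost d p pi), pi | exact: costs_lbound].
- by apply: ge_inf; [exists 0; exact: costs_lbound | exists pi].
Qed.

Lemma wass_lt_coupling (mu nu : X -> R) v : fsprob mu -> fsprob nu -> 0 <= v ->
  wass d p mu nu < v `^ p^-1 -> exists2 pi, coupling mu nu pi & tcost d p pi < v.
Proof.
move=> muP nuP v0 wlt; pose pi0 w := mu w.1 * nu w.2.
have ne : costs mu nu !=set0.
  by exists (tcost d p pi0), pi0; first exact: coupling_product.
have inf0 : 0 <= inf (costs mu nu) by apply: lb_le_inf => //; exact: costs_lbound.
have : inf (costs mu nu) < v.
  rewrite ltNge; apply/negP => vinf; move: wlt; apply/negP; rewrite -leNgt.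
  by apply: ge0_ler_powR; rewrite ?invr_ge0 ?nnegrE ?(ltW p_gt0).
by move=> /(inf_lt ne)[_ [pi cpi ->] lt]; exists pi.
Qed.

Lemma wass_push_le (f : X -> X) (nu : X -> R) rho : fsprob nu -> 0 <= rho ->
    (forall a, supp nu a -> 0 <= d a (f a) <= rho) ->
  wass d p nu (push f nu) <= rho.
Proof.
move=> nuP rho0 near; have [nu0 nufin nu1] := nuP.
apply: le_trans (wass_le_tcost (coupling_graph_plan f nuP)) _.
have rhoK : (rho `^ p) `^ p^-1 = rho by rewrite -powRrM mulfV ?gt_eqF ?powRr1.
rewrite -[leRHS]rhoK.
apply: ge0_ler_powR; rewrite ?invr_ge0 ?nnegrE ?(ltW p_gt0) ?powR_ge0 //.
  by apply: tcost_ge0; case: (coupling_graph_plan f nuP).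
rewrite tcost_graph_plan -[leRHS]mul1r -nu1 mulr_fsuml.
apply: ler_fsum => // a /near /andP[da0 darho]; rewrite ler_wpM2l //.
by apply: ge0_ler_powR; rewrite ?nnegrE ?(ltW p_gt0).
Qed.

Lemma mass_mul_far_le_tcost (mu nu : X -> R) pi a rho : fsprob mu -> fsprob nu ->
    coupling mu nu pi -> 0 <= rho -> (forall b, supp nu b -> rho <= d a b) ->
  supp mu a -> mu a * rho `^ p <= tcost d p pi.
Proof.
move=> [_ mufin _] [_ nufin _] [pi0 spi mu_marg _] rho0 far sa.
have cost0 w : 0 <= pi w * d w.1 w.2 `^ p by rewrite mulr_ge0 ?powR_ge0.
rewrite /tcost (fsbig_widen _ (supp mu `*` supp nu)) //; first last.
  by move=> w [_ /negP]; rewrite /supp /= negbK => /eqP ->; rewrite mul0r.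
rewrite (eq_fsbigr (fun w => pi (w.1, w.2) * d w.1 w.2 `^ p)); last by case.
rewrite -(pair_fsbig _ (fun x y => pi (x, y) * d x y `^ p)) //.
have inner0 x : supp mu x -> 0 <= \sum_(y \in supp nu) pi (x, y) * d x y `^ p.
  by move=> _; apply: fsumr_ge0.
apply: le_trans (fsum_ge_term mufin inner0 sa).
rewrite -mu_marg mulr_fsuml; apply: ler_fsum => // b sb; rewrite ler_wpM2l //.
by apply: ge0_ler_powR; rewrite ?nnegrE ?(ltW p_gt0) ?(le_trans rho0 (far b sb)) ?far.
Qed.

Lemma near_supp_of_wass_lt (mu nu : X -> R) a c rho : fsprob mu -> fsprob nu ->
    supp mu a -> 0 < c -> c <= mu a -> 0 < rho ->
    wass d p mu nu < (c * rho `^ p) `^ p^-1 ->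
  exists2 b, supp nu b & d a b < rho.
Proof.
move=> muP nuP sa c0 cmu rho0 wlt; apply: contrapT => nonear.
have far b : supp nu b -> rho <= d a b.
  by move=> sb; rewrite leNgt; apply/negP => dab; apply: nonear; exists b.
have [pi cpi cost_lt] := wass_lt_coupling muP nuP (ltW (mulr_gt0 c0 (powR_gt0 _ rho0))) wlt.
have := mass_mul_far_le_tcost muP nuP cpi (ltW rho0) far sa.
apply/negP; rewrite -ltNge; apply: lt_le_trans cost_lt _.
by rewrite ler_wpM2r ?powR_ge0.
Qed.

End Wasserstein.

Section Radius.
Variable R : realType.

Lemma finite_uniform_pos (T : choiceType) (A : set T) (P : T -> R -> Prop) r0 :
    finite_set A -> (forall a r r', 0 < r' <= r -> P a r -> P a r') ->
    (forall a, A a -> exists2 r, 0 < r & P a r) -> 0 < r0 ->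
  exists2 r, 0 < r <= r0 & forall a, A a -> P a r.
Proof.
move=> /finite_seqP[s ->] Pshrink + r0_gt0.
elim: s => [|a s IH] Ppos; first by exists r0; rewrite ?r0_gt0 ?lexx.
have [ra ra_gt0 Pa] := Ppos a (mem_head _ _).
have [rs /andP[rs_gt0 rs_r0] Ps] : exists2 r, 0 < r <= r0 & forall b, b \in s -> P b r.
  by apply: IH => b bs; apply: Ppos; rewrite /= in_cons bs orbT.
have r_gt0 : 0 < Num.min ra rs by rewrite lt_min ra_gt0.
exists (Num.min ra rs) => [|b]; first by rewrite r_gt0 ge_min rs_r0 orbT.
rewrite /= in_cons => /orP[/eqP->|bs].
  by apply: Pshrink Pa; rewrite r_gt0 ge_min lexx.
by apply: Pshrink (Ps b bs); rewrite r_gt0 ge_min lexx orbT.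
Qed.

Lemma finite_dopen_radius (X : choiceType) (d : X -> X -> R) (I : Type)
    (U : I -> set X) (A : set X) (r0 : R) :
    finite_set A -> (forall i, dopen d (U i)) ->
    A `<=` \bigcup_(i in setT) U i -> 0 < r0 ->
  exists2 rho, 0 < rho < r0 & forall a, A a -> exists2 i, U i a & dball d a rho `<=` U i.
Proof.
move=> Afin Uopen AU r0_gt0.
have [rho /andP[rho_gt0 rho_r0] rhoU] : exists2 rho, 0 < rho <= r0 / 2 &
    forall a, A a -> exists2 i, U i a & dball d a rho `<=` U i.
  apply: finite_uniform_pos => //; last by rewrite divr_gt0.
  - move=> a r r' /andP[_ r'r] [i Uia ballU]; exists i => // b dab.
    by apply: ballU; apply: lt_le_trans dab r'r.
  - by move=> a /AU[i _ Uia]; have [r r_gt0 ballU] := Uopen i a Uia; exists r => //; exists i.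
by exists rho => //; rewrite rho_gt0 (le_lt_trans rho_r0) //; lra.
Qed.

Lemma fsprob_mass_lbound (X : choiceType) (z : X -> R) : fsprob z ->
  exists2 c, 0 < c & forall a, supp z a -> c <= z a.
Proof.
move=> [z0 zfin _].
have [c /andP[c_gt0 _] c_le] : exists2 c, 0 < c <= 1 & forall a, supp z a -> c <= z a.
  apply: finite_uniform_pos => // [a c c' /andP[_ c'c] cz|a za].
    exact: le_trans c'c cz.
  by exists (z a) => //; rewrite lt_neqAle eq_sym za z0.
by exists c.
Qed.

End Radius.

Lemma disjoint_family_mem_iff (I : eqType) (T : Type) (U : I -> set T) i j a b :
    (forall i j, i != j -> U i `&` U j = set0) -> U j a -> U j b ->
  U i a <-> U i b.
Proof.
move=> Udisj Uja Ujb; have [->|ij] := eqVneq i j; first by [].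
have Uij0 := Udisj i j ij.
by split=> Ui; [have : (U i `&` U j) a by [] | have : (U i `&` U j) b by []];
  rewrite Uij0.
Qed.

Theorem proposition4p9 (R : realType) (X : choiceType) (d : X -> X -> R)
  (hmetric : is_metric d) (hcompact : dcompact d)
  (W : set (set X)) (hW : unif_bdd_open_cover d W)
  (n : nat) (x : 'I_n -> X) (m : 'I_n -> R)
  (hx : injective x) (hm : forall i, 0 < m i)
  (mu : X -> R) (hmu : mu = fun y => \sum_(i < n) (if x i == y then m i else 0))
  (hmuV : VietM W mu)
  (U : 'I_n -> set X) (hUopen : forall i, dopen d (U i))
  (hUdisj : forall i j, i != j -> U i `&` U j = set0)
  (hxU : forall i, U i (x i))
  (hUW : exists2 W0, W W0 & \bigcup_(i in setT) U i `<=` W0)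
  (eps : R) (heps : 0 < eps)
  (p : R) (hp : 1 <= p) (r : R) (hr : 0 < r) :
  let B := [set z | VietM W z /\ wass d p mu z < r] in
  lsc d p (P_fam W U `&` B)
    (fun zeta => [set nu | P_mu W mu U eps nu /\ supp nu `<=` supp zeta]).
Proof.
move=> B S Sopen; split=> [z [] //|z [Az [nu [[[nuP _] nuU nu_meas] nuz] Snu]]].
have p_gt0 : 0 < p by apply: lt_le_trans hp.
have [_ nufin _] := nuP.
have [r0 r0_gt0 ballS] := Sopen nu nuP Snu.
have [rho /andP[rho_gt0 rho_r0] rhoU] := finite_dopen_radius nufin hUopen nuU r0_gt0.
have zP : fsprob z := Az.2.1.1.
have [c c_gt0 c_le] := fsprob_mass_lbound zP.
exists ((c * rho `^ p) `^ p^-1); first by rewrite powR_gt0 // mulr_gt0 // powR_gt0.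
move=> z' Az' wlt; split=> //.
have /choice[f f_near] : forall a, exists b, supp nu a -> supp z' b /\ d a b < rho.
  move=> a; have [sa|nsa] := pselect (supp nu a); last by exists a => /nsa.
  have [b sb dab] := near_supp_of_wass_lt p_gt0 zP Az'.2.1.1 (nuz a sa) c_gt0 (c_le a (nuz a sa)) rho_gt0 wlt.
  by exists b.
have f_local i a : supp nu a -> U i (f a) <-> U i a.
  move=> sa; have [j Uja ballU] := rhoU a sa.
  exact: disjoint_family_mem_iff hUdisj (ballU _ (f_near a sa).2) Uja.
have suppU : supp (push f nu) `<=` \bigcup_(i in setT) U i.
  by rewrite supp_push // => _ [a sa <-]; have [i _ Uia] := nuU a sa; exists i; rewrite ?f_local.
have [W0 W0W UW0] := hUW.
exists (push f nu); first split; first split.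
- by split; [exact: fsprob_push | exists W0 => //; exact: subset_trans suppU UW0].
- exact: suppU.
- by move=> i; rewrite meas_push_local // => a; apply: f_local.
- by rewrite supp_push // => _ [a sa <-]; apply: (f_near a sa).1.
- apply: ballS (fsprob_push f nuP) _; apply: le_lt_trans rho_r0.
  apply: (wass_push_le p_gt0 nuP (ltW rho_gt0)) => a sa; have [_ dlt] := f_near a sa.
  by rewrite (ltW dlt) andbT; case: hmetric.
Qed.
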